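(* Let $P$ be a $(0,1)$-polytope with the integer decomposition property. If the toric ring $\mathbf{k}[P]$ is nearly Gorenstein, then $\mathbf{k}[P]$ is level.
   Context: $\mathbf{k}$ is an infinite field. A $(0,1)$-polytope has all vertices in $\{0,1\}^d$. $P$ has the integer decomposition property if for every $k\ge1$ every lattice point of $kP$ is a sum of $k$ lattice points of $P$. The toric ring is $\mathbf{k}[P]=\mathbf{k}[\mathbf{t}^xs: x\in P\cap\mathbb{Z}^d]$, standard graded by the exponent of $s$, with graded maximal ideal $\mathbf{m}$ and canonical module $\omega$. It is nearly Gorenstein if $\mathbf{m}\subseteq\mathrm{tr}(\omega)=\sum_{\phi\in\mathrm{Hom}(\omega,\mathbf{k}[P])}\phi(\omega)$, and level if all minimal homogeneous generators of $\omega$ have the same degree. *)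

From HB Require Import structures.
From mathcomp Require Import all_boot all_order all_algebra.
From mathcomp Require Import mpoly.
Set Implicit Arguments. Unset Strict Implicit. Unset Printing Implicit Defensive.
Import Order.TTheory GRing.Theory Num.Theory.
Local Open Scope ring_scope.

(* A (0,1)-polytope P in R^d is given by a family V : 'I_n -> ('I_d -> bool)
   of 0/1 vectors; P = conv(V).  The ambient ring of k[P] is the polynomial
   ring k[t_1,...,t_d,s] = {mpoly K[d.+1]}: the variable of index ord_max is s,
   the variable of index (lift ord_max j) is t_j.  A monomial m : 'X_{1..d.+1}
   stands for t^x s^k with k = m ord_max and x j = m (lift ord_max j). *)

Section Toric.
Variables (K : fieldType) (d n : nat) (V : 'I_n -> 'I_d -> bool).

(* x is a lattice point of kP = k * conv(V) (coefficients in Q; since the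
   vertices are rational this is the same as over R). *)
Definition latt_pt (k : nat) (x : 'I_d -> nat) : Prop :=
  exists lam : 'I_n -> rat,
    [/\ forall i, 0 <= lam i,
        \sum_i lam i = k%:R &
        forall j, (x j)%:R = \sum_i lam i * (V i j : nat)%:R].

Definition IDP : Prop :=
  forall (k : nat) (x : 'I_d -> nat), (1 <= k)%N -> latt_pt k x ->
    exists y : 'I_k -> 'I_d -> nat,
      (forall i, latt_pt 1 (y i)) /\ forall j, x j = (\sum_i y i j)%N.

Definition mdeg (m : 'X_{1..d.+1}) : nat := m ord_max.
Definition mexp (m : 'X_{1..d.+1}) (j : 'I_d) : nat := m (lift ord_max j).

(* monomials of k[P]: products of k generators t^y s, y in P ∩ Z^d *)
Definition in_semigroup (m : 'X_{1..d.+1}) : Prop :=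
  exists y : 'I_(mdeg m) -> 'I_d -> nat,
    (forall i, latt_pt 1 (y i)) /\ forall j, mexp m j = (\sum_i y i j)%N.

(* lattice points in the relative interior of the cone over P x {1}:
   strictly positive combinations of all the generators (V i, 1) *)
Definition in_relint (m : 'X_{1..d.+1}) : Prop :=
  exists lam : 'I_n -> rat,
    [/\ forall i, 0 < lam i,
        \sum_i lam i = (mdeg m)%:R &
        forall j, (mexp m j)%:R = \sum_i lam i * (V i j : nat)%:R].

Definition toric (p : {mpoly K[d.+1]}) : Prop :=
  forall m, m \in msupp p -> in_semigroup m.

Definition max_ideal (p : {mpoly K[d.+1]}) : Prop :=
  toric p /\ p@_0%MM = 0.

(* canonical module (Danilov--Stanley): k-span of the interior monomials *)
Definition canon (p : {mpoly K[d.+1]}) : Prop :=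
  forall m, m \in msupp p -> in_relint m.

Definition hom_canon (phi : {mpoly K[d.+1]} -> {mpoly K[d.+1]}) : Prop :=
  [/\ forall a b, canon a -> canon b -> phi (a + b) = phi a + phi b,
      forall r a, toric r -> canon a -> phi (r * a) = r * phi a &
      forall a, canon a -> toric (phi a)].

Definition trace_canon (p : {mpoly K[d.+1]}) : Prop :=
  exists (k : nat) (phi : 'I_k -> {mpoly K[d.+1]} -> {mpoly K[d.+1]})
         (w : 'I_k -> {mpoly K[d.+1]}),
    [/\ forall i, hom_canon (phi i), forall i, canon (w i) &
        p = \sum_i phi i (w i)].

Definition nearly_gorenstein : Prop :=
  forall p, max_ideal p -> trace_canon p.

(* homogeneous of degree e (grading by the exponent of s) *)
Definition homog_deg (e : nat) (p : {mpoly K[d.+1]}) : Prop :=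
  forall m, m \in msupp p -> mdeg m = e.

Definition generates_canon (k : nat) (P : pred 'I_k)
    (g : 'I_k -> {mpoly K[d.+1]}) : Prop :=
  forall w, canon w -> exists r : 'I_k -> {mpoly K[d.+1]},
    (forall i, toric (r i)) /\ w = \sum_(i | P i) r i * g i.

Definition min_homog_gens (k : nat) (g : 'I_k -> {mpoly K[d.+1]})
    (e : 'I_k -> nat) : Prop :=
  [/\ forall i, canon (g i) /\ homog_deg (e i) (g i),
      generates_canon predT g &
      forall j, ~ generates_canon (fun i => i != j) g].

Definition level : Prop :=
  forall (k : nat) (g : 'I_k -> {mpoly K[d.+1]}) (e : 'I_k -> nat),
    min_homog_gens g e -> forall i j, e i = e j.

End Toric.

Definition infinite_field (K : fieldType) : Prop :=
  forall s : seq K, exists x : K, x \notin s.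

From Pilot Require Import Defs.
From mathcomp Require Import all_boot all_order all_algebra.
From mathcomp Require Import mpoly.
From mathcomp Require Import zify ring lra.
From Stdlib Require Import Classical Wf_nat.
Set Implicit Arguments. Unset Strict Implicit. Unset Printing Implicit Defensive.
Import Order.TTheory GRing.Theory Num.Theory.
Local Open Scope ring_scope.

(* Let a0 be the least degree of an interior lattice point of the cone over P.
   It suffices that every interior x splits as y + c with y interior of degree
   a0 and c in the semigroup S of k[P]: then the degree-a0 members of a system
   of homogeneous generators of omega already generate it, so a minimal system
   has no member of another degree.
   Nearly Gorenstein puts each generator t^(v_i) s of m into tr(omega), which
   (omega being monomial) gives interior a_i with relint + v_i <= a_i + S.
   If some a_i has degree a0 + 1, then a_i = y0 + v_i and x = y0 + (x + v_i - a_i).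
   Otherwise every a_i has degree a0 and y + v_i - a_i is a vertex of P for each
   interior y of degree a0. Hence on every coordinate either v_i - a_i does not
   depend on i, or all such y agree. Writing x + v_i0 - a_i0 = v_u + c', the
   point x - a_u is a nonnegative combination, with total weight deg x - a0, of
   "mixed" vertices (v_u on coordinates of the first kind, v_w on the others);
   Farkas' lemma supplies the weights of the v_w. By IDP, x - a_u lies in S. *)
Section ConicalHull.
Variable J : finType.

Definition dotv (s v : J -> rat) : rat := \sum_j s j * v j.

Definition incone n (g : 'I_n -> J -> rat) (z : J -> rat) : Prop :=
  exists lam : 'I_n -> rat,
    (forall i, 0 <= lam i) /\ forall j, z j = \sum_i lam i * g i j.

Lemma dotv_linr s a b (u v : J -> rat) :
  dotv s (fun j => a * u j - b * v j) = a * dotv s u - b * dotv s v.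
Proof. by rewrite /dotv !mulr_sumr -sumrB; apply: eq_bigr => j _; ring. Qed.

Lemma dotv_linl (s t : J -> rat) a b v :
  dotv (fun j => a * s j - b * t j) v = a * dotv s v - b * dotv t v.
Proof. by rewrite /dotv !mulr_sumr -sumrB; apply: eq_bigr => j _; ring. Qed.

Lemma dotv_sumr n (s : J -> rat) (lam : 'I_n -> rat) (g : 'I_n -> J -> rat) :
  dotv s (fun j => \sum_i lam i * g i j) = \sum_i lam i * dotv s (g i).
Proof.
rewrite /dotv; under eq_bigr do rewrite mulr_sumr.
rewrite exchange_big /=; apply: eq_bigr => i _; rewrite mulr_sumr.
by apply: eq_bigr => j _; ring.
Qed.

Lemma incone_recl n (g : 'I_n.+1 -> J -> rat) z nu :
  0 <= nu -> incone (fun i => g (lift ord0 i)) (fun j => z j - nu * g ord0 j) ->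
  incone g z.
Proof.
move=> nu_ge0 [lam [lam_ge0 Hz]].
exists (fun i => if unlift ord0 i is Some i' then lam i' else nu).
split=> [i|j]; first by case: unlift.
rewrite big_ord_recl unlift_none; under eq_bigr do rewrite liftK.
by rewrite -Hz addrC subrK.
Qed.

Lemma farkas0 (g : 'I_0 -> J -> rat) z :
  ~ incone g z -> exists s, (forall i, 0 <= dotv s (g i)) /\ dotv s z < 0.
Proof.
move=> notin; have [/existsP[j zj_neq0] | z_eq0] := boolP [exists j, z j != 0].
  exists (fun j => - z j); split=> [[]//|].
  have zj2_gt0 : 0 < z j * z j by rewrite -expr2 exprn_even_gt0.
  have rest_ge0 : 0 <= \sum_(i | i != j) z i * z i.
    by apply: sumr_ge0 => i _; rewrite -expr2 sqr_ge0.
  rewrite /dotv (bigD1 j) //=; under eq_bigr do rewrite mulNr; rewrite sumrN; lra.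
case: notin; exists (fun _ => 0); split=> // j; rewrite big_ord0.
by apply/eqP; move: z_eq0; rewrite negb_exists => /forallP/(_ j); rewrite negbK.
Qed.

Lemma farkas n (g : 'I_n -> J -> rat) z :
  ~ incone g z -> exists s, (forall i, 0 <= dotv s (g i)) /\ dotv s z < 0.
Proof.
elim: n g z => [|n IH] g z notin; first exact: farkas0.
pose g' i := g (lift ord0 i); pose g0 := g ord0.
have [s [s_ge0 sz_lt0]] : exists s, (forall i, 0 <= dotv s (g' i)) /\ dotv s z < 0.
  apply: IH => -[lam [lam_ge0 Hz]]; apply: notin; apply: (@incone_recl _ _ _ 0) => //.
  by exists lam; split=> // j; rewrite mul0r subr0.
have [sg0_ge0 | sg0_lt0] := leP 0 (dotv s g0).
  exists s; split=> // i.
  by case: (unliftP ord0 i) => [i' ->|->]; [exact: s_ge0 | exact: sg0_ge0].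
(* Fourier-Motzkin step: project along g0 onto the hyperplane where s vanishes. *)
pose al := dotv s g0.
pose proj v j := al * v j - dotv s v * g0 j.
have [t [t_ge0 tz_lt0]] :
    exists t, (forall i, 0 <= dotv t (proj (g' i))) /\ dotv t (proj z) < 0.
  apply: IH => -[mu [mu_ge0 Hmu]]; apply: notin.
  pose U := \sum_i mu i * dotv s (g' i).
  have U_ge0 : 0 <= U by apply: sumr_ge0 => i _; apply: mulr_ge0.
  apply: (@incone_recl _ _ _ ((dotv s z - U) / al)).
    by rewrite ler_ndivlMr // mul0r; lra.
  have al_neq0 : al != 0 by rewrite lt_eqF.
  exists mu; split=> // j; have := Hmu j; rewrite /proj.
  have -> : \sum_i mu i * (al * g' i j - dotv s (g' i) * g0 j)
            = al * (\sum_i mu i * g' i j) - U * g0 j.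
    by rewrite mulr_sumr /U mulr_suml -sumrB; apply: eq_bigr => i _; ring.
  move=> Hj; have -> : \sum_i mu i * g' i j
                       = (al * z j - dotv s z * g0 j + U * g0 j) / al.
    by rewrite Hj; field.
  by rewrite -/g0; field.
have dotv_proj v : dotv (fun j => al * t j - dotv t g0 * s j) v = dotv t (proj v).
  by rewrite /proj dotv_linl dotv_linr [dotv t g0 * _]mulrC.
exists (fun j => al * t j - dotv t g0 * s j); split; last by rewrite dotv_proj.
move=> i; rewrite dotv_proj; case: (unliftP ord0 i) => [i' ->|->]; first exact: t_ge0.
by rewrite dotv_linr mulrC subrr.
Qed.

Lemma incone_of_translates n (i0 : 'I_n) (g : 'I_n -> J -> rat) D j0 :
  (forall i, g i j0 = 1) -> 0 <= D j0 ->
  (forall w, incone g (fun j => D j + g w j)) -> incone g D.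
Proof.
(* With c the least value of a separating s on the g i, s - c * (j0-th
   coordinate) stays nonnegative on the cone but is negative on D + g i1. *)
move=> g_j0 D_j0 translates; apply: NNPP => /farkas[s [s_ge0 sD_lt0]].
have [i1 _ i1_min] := arg_minP (fun i => dotv s (g i)) (isT : predT i0).
pose c := dotv s (g i1).
pose s' j := 1 * s j - c * (j == j0)%:R.
have dotv_s' v : dotv s' v = dotv s v - c * v j0.
  rewrite /s' dotv_linl mul1r /dotv [X in c * X](bigD1 j0) //= eqxx mul1r.
  by rewrite [X in v j0 + X]big1 ?addr0 // => j /negbTE ->; rewrite mul0r.
have [lam [lam_ge0 Hlam]] := translates i1.
have sum_ge0 : 0 <= \sum_i lam i * dotv s' (g i).
  apply: sumr_ge0 => i _; apply: mulr_ge0 => //.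
  by rewrite dotv_s' g_j0 mulr1 subr_ge0; exact: i1_min.
have : dotv s' (fun j => D j + g i1 j) = \sum_i lam i * dotv s' (g i).
  by rewrite -dotv_sumr /dotv; apply: eq_bigr => k _; rewrite Hlam.
have -> : dotv s' (fun j => D j + g i1 j) = dotv s D - c * D j0.
  rewrite dotv_s' /= g_j0 /dotv; under eq_bigr do rewrite mulrDr.
  by rewrite big_split /= -/(dotv s D) -/(dotv s (g i1)) -/c; ring.
have : 0 <= c * D j0 by apply: mulr_ge0 => //; exact: s_ge0.
lra.
Qed.
End ConicalHull.

(* Not the total degree [mpoly.mdeg]: this is the degree in s. *)
Local Notation mdeg := (@Defs.mdeg _).

Section LatticePoints.
Variables (d n : nat) (V : 'I_n -> 'I_d -> bool).

Lemma eq_latt_pt k (x y : 'I_d -> nat) :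
  (forall j, x j = y j) -> latt_pt V k x -> latt_pt V k y.
Proof. by move=> Exy [lam [? ? Hx]]; exists lam; split=> // j; rewrite -Exy. Qed.

Lemma latt_ptD k l x y : latt_pt V k x -> latt_pt V l y ->
  latt_pt V (k + l) (fun j => (x j + y j)%N).
Proof.
move=> [a [a_ge0 a_sum Ha]] [b [b_ge0 b_sum Hb]].
exists (fun i => a i + b i); split=> [i||j]; first exact: addr_ge0.
  by rewrite big_split /= a_sum b_sum natrD.
by rewrite natrD Ha Hb -big_split; apply: eq_bigr => i _; rewrite mulrDl.
Qed.

Lemma latt_pt_le k x j : latt_pt V k x -> (x j <= k)%N.
Proof.
move=> [a [a_ge0 a_sum Ha]]; rewrite -(ler_nat rat) Ha -a_sum.
by apply: ler_sum => i _; rewrite ler_piMr //; case: (V i j).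
Qed.

Lemma latt_pt0 x j : latt_pt V 0 x -> x j = 0%N.
Proof. by move=> x_lat; apply/eqP; rewrite -leqn0; exact: latt_pt_le x_lat. Qed.

Lemma latt_pt_vertex i : latt_pt V 1 (fun j => V i j : nat).
Proof.
exists (fun u => (u == i)%:R); split=> [u||j]; first by rewrite ler0n.
  by rewrite (bigD1 i) //= eqxx big1 ?addr0 // => u /negbTE ->.
rewrite (bigD1 i) //= eqxx mul1r big1 ?addr0 // => u /negbTE ->.
by rewrite mul0r.
Qed.

Lemma latt_pt1_vertex x : latt_pt V 1 x -> exists u, forall j, x j = V u j.
Proof.
move=> x_lat; have [a [a_ge0 a_sum Ha]] := x_lat.
have /existsP[u au_gt0] : [exists u, 0 < a u].
  have : \sum_i a i != 0 by rewrite a_sum oner_neq0.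
  apply: contraR; rewrite negb_exists => /forallP a_le0.
  by apply/eqP/big1 => i _; apply/eqP; rewrite eq_le a_ge0 andbT leNgt a_le0.
exists u => j; have := latt_pt_le j x_lat; rewrite leq_eqVlt ltnS leqn0.
have zero_term (F : 'I_n -> rat) :
    (forall i, 0 <= F i) -> \sum_i a i * F i = 0 -> F u = 0.
  move=> F_ge0 /psumr_eq0P-/(_ (fun i _ => mulr_ge0 (a_ge0 i) (F_ge0 i)) u isT).
  by move/eqP; rewrite mulf_eq0 gt_eqF //= => /eqP.
case/orP=> /eqP xj; move: (Ha j); rewrite xj => Haj.
- suff : 1 - (V u j : nat)%:R = 0 :> rat.
    by case: (V u j) => // /eqP; rewrite subr0 oner_eq0.
  apply: (zero_term (fun i => 1 - (V i j : nat)%:R)) => [i|].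
    by case: (V i j); rewrite ?subrr ?subr0.
  by under eq_bigr do rewrite mulrBr mulr1; rewrite sumrB a_sum -Haj subrr.
- suff : (V u j : nat)%:R = 0 :> rat by case: (V u j) => // /eqP; rewrite oner_eq0.
  by apply: (zero_term (fun i => (V i j : nat)%:R)) => [i|]; rewrite ?ler0n // -Haj.
Qed.

Lemma latt_pt_conv (I : finType) (mu : I -> rat) (W : I -> 'I_d -> nat) k x :
  (forall i, 0 <= mu i) -> (forall i, latt_pt V 1 (W i)) ->
  \sum_i mu i = k%:R -> (forall j, (x j)%:R = \sum_i mu i * (W i j)%:R) ->
  latt_pt V k x.
Proof.
move=> mu_ge0 W_lat mu_sum Hx; have [lw Hlw] := fin_all_exists W_lat.
exists (fun v => \sum_i mu i * lw i v); split.
- move=> v; apply: sumr_ge0 => i _; apply: mulr_ge0 => //; by case: (Hlw i).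
- rewrite exchange_big /= -mu_sum; apply: eq_bigr => i _.
  by rewrite -mulr_sumr; case: (Hlw i) => _ -> _; rewrite mulr1.
- move=> j; rewrite Hx; under [RHS]eq_bigr do rewrite mulr_suml.
  rewrite [RHS]exchange_big /=; apply: eq_bigr => i _.
  case: (Hlw i) => _ _ ->; rewrite mulr_sumr; apply: eq_bigr => v _; ring.
Qed.

Lemma latt_pt_sum N (y : 'I_N -> 'I_d -> nat) :
  (forall t, latt_pt V 1 (y t)) -> latt_pt V N (fun j => \sum_t y t j)%N.
Proof.
move=> y_lat; apply: (@latt_pt_conv _ (fun _ => 1) y) => //.
- by rewrite sumr_const card_ord.
- by move=> j; rewrite natr_sum; apply: eq_bigr => t _; rewrite mul1r.
Qed.

End LatticePoints.

Section Monomials.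
Variables (d n : nat) (V : 'I_n -> 'I_d -> bool).
Hypothesis idp : IDP V.

Local Notation mono := 'X_{1..d.+1}.

Definition tmon (k : nat) (x : 'I_d -> nat) : mono :=
  [multinom if unlift ord_max j is Some j' then x j' else k | j < d.+1].

Definition vmon (i : 'I_n) : mono := tmon 1 (fun j => V i j).

Lemma mdeg_tmon k x : mdeg (tmon k x) = k.
Proof. by rewrite /Defs.mdeg mnmE unlift_none. Qed.

Lemma mexp_tmon k x j : mexp (tmon k x) j = x j.
Proof. by rewrite /mexp mnmE liftK. Qed.

Lemma mono_eq (m1 m2 : mono) :
  mdeg m1 = mdeg m2 -> (forall j, mexp m1 j = mexp m2 j) -> m1 = m2.
Proof.
move=> Edeg Eexp; apply/mnmP => i.
by case: (unliftP ord_max i) => [j ->|->]; [exact: Eexp | exact: Edeg].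
Qed.

Lemma mdegD (m1 m2 : mono) : mdeg (m1 + m2)%MM = (mdeg m1 + mdeg m2)%N.
Proof. by rewrite /Defs.mdeg mnmDE. Qed.

Lemma mexpD (m1 m2 : mono) j : mexp (m1 + m2)%MM j = (mexp m1 j + mexp m2 j)%N.
Proof. by rewrite /mexp mnmDE. Qed.

Lemma mdeg0 : mdeg (0%MM : mono) = 0%N.
Proof. by rewrite /Defs.mdeg mnm0E. Qed.

Lemma mexp0 j : mexp (0%MM : mono) j = 0%N.
Proof. by rewrite /mexp mnm0E. Qed.

Lemma in_semigroupP (m : mono) : in_semigroup V m <-> latt_pt V (mdeg m) (mexp m).
Proof.
split=> [[y [y_lat Ey]] | m_lat].
  by apply: eq_latt_pt (latt_pt_sum y_lat) => j; rewrite Ey.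
have [deg0|deg_gt0] := posnP (mdeg m); last exact: idp deg_gt0 m_lat.
have m_lat0 : latt_pt V 0 (mexp m) by rewrite -deg0.
exists (fun _ _ => 0%N); split=> [t|j]; first by case: t => t; rewrite deg0.
by rewrite big1 // (latt_pt0 j m_lat0).
Qed.

Lemma relint_latt_pt (m : mono) : in_relint V m -> latt_pt V (mdeg m) (mexp m).
Proof. by move=> [lam [lam_gt0 ? ?]]; exists lam; split=> // i; exact: ltW. Qed.

Lemma relint_semigroup (m : mono) : in_relint V m -> in_semigroup V m.
Proof. by move/relint_latt_pt/in_semigroupP. Qed.

Lemma semigroupD (a b : mono) :
  in_semigroup V a -> in_semigroup V b -> in_semigroup V (a + b)%MM.
Proof.
move=> /in_semigroupP a_lat /in_semigroupP b_lat; apply/in_semigroupP.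
by rewrite mdegD; apply: eq_latt_pt (latt_ptD a_lat b_lat) => j; rewrite mexpD.
Qed.

Lemma semigroup0 : in_semigroup V 0%MM.
Proof.
exists (fun _ _ => 0%N); split=> [t|j]; first by case: t => t; rewrite mdeg0.
by rewrite mexp0 big1.
Qed.

Lemma semigroup_vmon i : in_semigroup V (vmon i).
Proof.
apply/in_semigroupP; rewrite mdeg_tmon.
by apply: eq_latt_pt (latt_pt_vertex V i) => j; rewrite mexp_tmon.
Qed.

Lemma semigroup_mdeg0 (c : mono) : in_semigroup V c -> mdeg c = 0%N -> c = 0%MM.
Proof.
move=> /in_semigroupP c_lat deg0; rewrite deg0 in c_lat.
by apply: mono_eq => [|j]; rewrite ?mdeg0 // mexp0 (latt_pt0 j c_lat).
Qed.

Lemma semigroup_split (c : mono) : in_semigroup V c -> (0 < mdeg c)%N ->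
  exists u c', in_semigroup V c' /\ c = (vmon u + c')%MM.
Proof.
move=> [y [y_lat Ey]] deg_gt0; pose t0 := Ordinal deg_gt0.
have [u Hu] := latt_pt1_vertex (y_lat t0).
have V_le j : (V u j <= mexp c j)%N by rewrite Ey (bigD1 t0) //= -Hu leq_addr.
exists u, (tmon (mdeg c).-1 (fun j => mexp c j - V u j)%N); split.
  apply/in_semigroupP; rewrite mdeg_tmon.
  apply: (@latt_pt_conv _ _ _ _ (fun t => (t != t0)%:R) y) => // [|j].
    rewrite (bigD1 t0) //= add0r; under eq_bigr => t -> do [].
    by rewrite sumr_const cardC1 card_ord.
  rewrite mexp_tmon (bigD1 t0) //= mul0r add0r natrB // Ey (bigD1 t0) //=.
  rewrite natrD -Hu addrAC subrr add0r natr_sum.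
  by apply: eq_bigr => t ->; rewrite mul1r.
apply: mono_eq => [|j]; first by rewrite mdegD mdeg_tmon mdeg_tmon add1n prednK.
by rewrite mexpD !mexp_tmon subnKC.
Qed.

Lemma relint_sum_vertices : in_relint V (tmon n (fun j => \sum_i V i j)%N).
Proof.
exists (fun _ => 1); split=> [i||j]; first exact: ltr01.
  by rewrite mdeg_tmon sumr_const card_ord.
by rewrite mexp_tmon natr_sum; apply: eq_bigr => i _; rewrite mul1r.
Qed.

Lemma relint_min_mdeg :
  exists2 y0, in_relint V y0 & forall m, in_relint V m -> (mdeg y0 <= mdeg m)%N.
Proof.
pose P k := exists2 y, in_relint V y & mdeg y = k.
have [k [[[y y_rel <-] y_min] _]] := dec_inh_nat_subset_has_unique_least_element
  P (fun k => classic (P k)) (ex_intro P _ (ex_intro2 _ _ _ relint_sum_vertices erefl)).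
by exists y => // m m_rel; apply/ssrnat.leP/y_min; exists m.
Qed.

(* For interior a: X^b = X^a X^(b - a) with X^(b - a) in the inverse of the
   canonical module, i.e. X^b is in the trace of omega. *)
Definition shift_relint_sub (a b : mono) : Prop :=
  forall z, in_relint V z -> exists2 c, in_semigroup V c & (z + b)%MM = (a + c)%MM.

End Monomials.

Section Support.
Variables (K : fieldType) (N : nat) (P : 'X_{1..N} -> Prop).

Definition supp_in (p : {mpoly K[N]}) : Prop := forall m, m \in msupp p -> P m.

Lemma supp_in0 : supp_in 0.
Proof. by move=> m; rewrite msupp0. Qed.

Lemma supp_inD p q : supp_in p -> supp_in q -> supp_in (p + q).
Proof. by move=> Pp Pq m /msuppD_le; rewrite mem_cat => /orP[/Pp|/Pq]. Qed.

Lemma supp_inZ c p : supp_in p -> supp_in (c *: p).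
Proof. by move=> Pp m /msuppZ_le /Pp. Qed.

Lemma supp_inX m : P m -> supp_in 'X_[m].
Proof. by move=> Pm m'; rewrite msuppX mem_seq1 => /eqP ->. Qed.

Lemma supp_inC c : P 0%MM -> supp_in c%:MP.
Proof.
by move=> P0 m; rewrite msuppC; case: eqP => // _; rewrite mem_seq1 => /eqP ->.
Qed.

Lemma supp_inXM c p :
  (forall m, P m -> P (c + m)%MM) -> supp_in p -> supp_in ('X_[c] * p).
Proof.
move=> Pc Pp m; rewrite mulrC (perm_mem (msuppMX _ _)) => /mapP[m' /Pp Pm' ->].
exact: Pc.
Qed.

End Support.

Section CanonicalModule.
Variables (K : fieldType) (d n : nat) (V : 'I_n -> 'I_d -> bool).
Hypothesis idp : IDP V.

Local Notation mono := 'X_{1..d.+1}.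
Local Notation poly := {mpoly K[d.+1]}.

Lemma toric_canon (p : poly) : canon V p -> toric V p.
Proof. by move=> p_canon m /p_canon /(relint_semigroup idp). Qed.

Lemma hom_canon0 (phi : poly -> poly) : hom_canon V phi -> phi 0 = 0.
Proof.
case=> phiD _ _; have := phiD 0 0 (supp_in0 _) (supp_in0 _).
by rewrite addr0 => /(canLR (addrK _)); rewrite subrr.
Qed.

Lemma hom_canon_sum (phi : poly -> poly) (s : seq mono) (f : mono -> K) :
  hom_canon V phi -> (forall m, m \in s -> in_relint V m) ->
  phi (\sum_(m <- s) f m *: 'X_[m]) = \sum_(m <- s) f m *: phi 'X_[m].
Proof.
move=> phi_hom s_relint; have [phiD phiM _] := phi_hom.
suff [] : canon V (\sum_(m <- s) f m *: 'X_[m] : poly) /\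
          phi (\sum_(m <- s) f m *: 'X_[m]) = \sum_(m <- s) f m *: phi 'X_[m] by [].
rewrite !big_seq; apply: (big_ind2 (fun p q => canon V p /\ phi p = q)).
- by split; [exact: supp_in0 | exact: hom_canon0].
- move=> p1 q1 p2 q2 [p1_can <-] [p2_can <-].
  by split; [exact: supp_inD | exact: phiD].
move=> m /s_relint m_rel; have X_can : canon V ('X_[m] : poly) by exact: supp_inX.
split; first exact: supp_inZ.
by rewrite -!mul_mpolyC phiM //; apply: supp_inC; exact: semigroup0.
Qed.

Lemma hom_canon_mulC (phi : poly -> poly) a b : hom_canon V phi ->
  canon V a -> canon V b -> a * phi b = b * phi a.
Proof.
move=> [_ phiM _] a_can b_can.
have [a_tor b_tor] := (toric_canon a_can, toric_canon b_can).
by rewrite -phiM // mulrC phiM.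
Qed.

Lemma trace_coef_hom_monomial (p : poly) (b : mono) :
  trace_canon V p -> p@_b != 0 ->
  exists (phi : poly -> poly) m,
    [/\ hom_canon V phi, in_relint V m & (phi 'X_[m])@_b != 0].
Proof.
move=> [k [phi [w [phi_hom w_can ->]]]]; rewrite raddf_sum /=.
have [/existsP[t wt_b] _|/existsPn zero] := boolP [exists t, (phi t (w t))@_b != 0].
  move: wt_b; rewrite [w t]mpolyE hom_canon_sum //; last exact: w_can.
  rewrite raddf_sum /=.
  have [/hasP[m m_supp m_b] _|/hasPn zero] :=
    boolP (has (fun m => (phi t 'X_[m])@_b != 0) (msupp (w t))).
    by exists (phi t), m; split=> //; exact: w_can m_supp.
  rewrite big_seq big1 ?eqxx // => m /zero.
  by rewrite mcoeffZ negbK => /eqP ->; rewrite mulr0.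
by rewrite big1 ?eqxx // => t _; apply/eqP; rewrite -[_ == _]negbK zero.
Qed.

Lemma trace_monomial_shift (b : mono) :
  trace_canon V ('X_[b] : poly) -> exists2 a, in_relint V a & shift_relint_sub V a b.
Proof.
move=> tr; have [|phi [a [phi_hom a_rel phi_a_b]]] :=
  trace_coef_hom_monomial (b := b) tr; first by rewrite mcoeffX eqxx oner_neq0.
exists a => // z z_rel.
have [z_can a_can] : canon V ('X_[z] : poly) /\ canon V ('X_[a] : poly).
  by split; exact: supp_inX.
have : (phi 'X_[z] * 'X_[a])@_(z + b) != 0.
  by rewrite mulrC -(hom_canon_mulC phi_hom z_can a_can) mulrC mcoeffMX.
rewrite -mcoeff_msupp (perm_mem (msuppMX _ _)) => /mapP[c c_supp Ec].
exists c; last by rewrite Ec.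
have [_ _ phi_toric] := phi_hom; exact: phi_toric _ z_can _ c_supp.
Qed.

Lemma vmon_shift_witness : nearly_gorenstein K V ->
  forall i, exists2 a, in_relint V a & shift_relint_sub V a (vmon V i).
Proof.
move=> ng i; apply/trace_monomial_shift/ng; split.
  by apply: supp_inX; exact: semigroup_vmon.
rewrite mcoeffX; case: eqP => // /(congr1 mdeg).
by rewrite mdeg_tmon mdeg0.
Qed.
End CanonicalModule.

Lemma sum_pair_mul (I : finType) (f g : I -> rat) :
  \sum_(p : I * I) f p.1 * g p.2 = (\sum_u f u) * (\sum_v g v).
Proof.
rewrite -(pair_bigA _ (fun u v => f u * g v)) mulr_suml.
by apply: eq_bigr => u _; rewrite mulr_sumr.
Qed.

Section MinimalDecomposition.
Variables (d n : nat) (V : 'I_n -> 'I_d -> bool).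
Hypothesis idp : IDP V.
Variable a0 : nat.
Hypothesis a0_min : forall m, in_relint V m -> (a0 <= mdeg m)%N.

Local Notation mono := 'X_{1..d.+1}.
Local Notation vmon := (vmon V).

Definition min_decomposable (x : mono) : Prop :=
  exists y c, [/\ in_relint V y, mdeg y = a0, in_semigroup V c & x = (y + c)%MM].

Lemma shift_mdeg (a b x c : mono) : (x + b)%MM = (a + c)%MM ->
  (mdeg x + mdeg b = mdeg a + mdeg c)%N.
Proof. by move/(congr1 mdeg); rewrite !mdegD. Qed.

Lemma min_decomposable_of_vmon_shift (y0 : mono) i :
  in_relint V y0 -> mdeg y0 = a0 -> shift_relint_sub V (y0 + vmon i) (vmon i) ->
  forall x, in_relint V x -> min_decomposable x.
Proof.
move=> y0_rel y0_deg y0_shift x /y0_shift[c c_S].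
by rewrite -addmA [(vmon i + c)%MM]addmC addmA => /addIm Ex; exists y0, c.
Qed.

Lemma shift_witness_mdeg (a y : mono) i :
  in_relint V a -> shift_relint_sub V a (vmon i) -> in_relint V y -> mdeg y = a0 ->
  mdeg a = a0 \/ a = (y + vmon i)%MM.
Proof.
move=> a_rel a_shift y_rel y_deg; have [c c_S /[dup] E /shift_mdeg] := a_shift y y_rel.
rewrite y_deg mdeg_tmon; have := a0_min a_rel.
have [/(semigroup_mdeg0 idp c_S) c0 _ _|c_gt0] := posnP (mdeg c); last by left; lia.
by right; rewrite E c0 addm0.
Qed.

Section MinimalWitnesses.
Variables (a : 'I_n -> mono) (i0 : 'I_n).
Hypothesis a_relint : forall i, in_relint V (a i).
Hypothesis a_shift : forall i, shift_relint_sub V (a i) (vmon i).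
Hypothesis a_deg : forall i, mdeg (a i) = a0.

Lemma shift_witness x w : in_relint V x -> exists c,
  [/\ in_semigroup V c, mdeg c = (mdeg x - a0).+1 & (x + vmon w)%MM = (a w + c)%MM].
Proof.
move=> x_rel; have [c c_S E] := a_shift w x_rel; exists c; split=> //.
by have := a0_min x_rel; have := shift_mdeg E; rewrite mdeg_tmon a_deg; lia.
Qed.

Lemma shift_latt_pt y w : in_relint V y -> mdeg y = a0 -> exists W,
  latt_pt V 1 W /\ forall j, (mexp y j + V w j = mexp (a w) j + W j)%N.
Proof.
move=> y_rel y_deg.
have [c [/(in_semigroupP idp) c_lat c_deg E]] := shift_witness w y_rel.
exists (mexp c); split; first by rewrite c_deg y_deg subnn in c_lat.
by move=> j; have := congr1 (fun m => mexp m j) E; rewrite /= !mexpD mexp_tmon.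
Qed.

Definition fixed_coord (j : 'I_d) : bool :=
  [forall i, (V i j + mexp (a i0) j == V i0 j + mexp (a i) j)%N].

Lemma fixed_coordP j : fixed_coord j ->
  forall i i', (V i j + mexp (a i') j = V i' j + mexp (a i) j)%N.
Proof.
move=> /forallP fixed i i'; have := eqP (fixed i); have := eqP (fixed i'); lia.
Qed.

Lemma mexp_nonfixed_coord j : ~~ fixed_coord j ->
  forall y, in_relint V y -> mdeg y = a0 -> mexp y j = mexp (a i0) j.
Proof.
move=> /forallPn[i /eqP not_fixed] y y_rel y_deg.
have [Wa [/(latt_pt_le j) ? Ea]] := shift_latt_pt i y_rel y_deg.
have [Wb [/(latt_pt_le j) ? Eb]] := shift_latt_pt i0 y_rel y_deg.
have [Wc [/(latt_pt_le j) ? Ec]] := shift_latt_pt i (a_relint i0) (a_deg i0).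
move: (Ea j) (Eb j) (Ec j) not_fixed; lia.
Qed.

Lemma mixed_vertex_latt_pt u w :
  latt_pt V 1 (fun j => if fixed_coord j then V u j : nat else V w j).
Proof.
(* The mixed vertex is the lattice point a u + vmon w - a w of P. *)
have [W [W_lat EW]] := shift_latt_pt w (a_relint u) (a_deg u).
apply: eq_latt_pt W_lat => j; have := EW j.
case: ifP => [/fixed_coordP/(_ w u)|/negbT]; first by lia.
move=> /mexp_nonfixed_coord nonfixed; rewrite !nonfixed ?a_deg //; lia.
Qed.

Lemma latt_pt_mix k y z (mu : 'I_n -> rat) : (0 < k)%N -> latt_pt V k y ->
  (forall i, 0 <= mu i) -> \sum_i mu i = k%:R ->
  (forall j, ~~ fixed_coord j -> (z j)%:R = \sum_i mu i * (V i j : nat)%:R) ->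
  latt_pt V k (fun j => if fixed_coord j then y j else z j).
Proof.
move=> k_gt0 [lam [lam_ge0 lam_sum Hy]] mu_ge0 mu_sum Hz.
have k_neq0 : k%:R != 0 :> rat by rewrite pnatr_eq0 -lt0n.
pose wt (p : 'I_n * 'I_n) := lam p.1 * mu p.2 / k%:R.
apply: (@latt_pt_conv _ _ _ _ wt (fun p j => if fixed_coord j then V p.1 j : nat
                                              else V p.2 j)) => [p|p||j].
- by apply: mulr_ge0; [exact: mulr_ge0 | rewrite invr_ge0 ler0n].
- exact: mixed_vertex_latt_pt.
- have -> : \sum_p wt p = (\sum_u lam u) * (\sum_v mu v) / k%:R.
    by rewrite -sum_pair_mul mulr_suml.
  by rewrite lam_sum mu_sum mulfK.
case: (boolP (fixed_coord j)) => [_|/Hz ->].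
- have -> : \sum_p wt p * (V p.1 j : nat)%:R =
            (\sum_u lam u * (V u j : nat)%:R) * (\sum_v mu v) / k%:R.
    by rewrite -sum_pair_mul mulr_suml; apply: eq_bigr => p _; rewrite /wt; ring.
  by rewrite -Hy mu_sum mulfK.
- have -> : \sum_p wt p * (V p.2 j : nat)%:R =
            (\sum_u lam u) * (\sum_v mu v * (V v j : nat)%:R) / k%:R.
    by rewrite -sum_pair_mul mulr_suml; apply: eq_bigr => p _; rewrite /wt; ring.
  by rewrite lam_sum [k%:R * _]mulrC mulfK.
Qed.

Lemma excess_incone x : in_relint V x -> exists mu : 'I_n -> rat,
  [/\ forall i, 0 <= mu i, \sum_i mu i = (mdeg x - a0)%:R &
      forall j, ~~ fixed_coord j ->
        (mexp x j)%:R - (mexp (a i0) j)%:R = \sum_i mu i * (V i j : nat)%:R].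
Proof.
move=> x_rel.
pose G w (o : option 'I_d) : rat :=
  if o is Some j then (if fixed_coord j then 0 else (V w j : nat)%:R) else 1.
pose D (o : option 'I_d) : rat :=
  if o is Some j then
    (if fixed_coord j then 0 else (mexp x j)%:R - (mexp (a i0) j)%:R)
  else (mdeg x - a0)%:R.
have [mu [mu_ge0 Hmu]] : incone G D.
  (* D + G w encodes x + vmon w - a w, a point of the cone by [shift_witness]. *)
  apply: (incone_of_translates i0 (j0 := None)) => // w.
  have [c [c_S c_deg E]] := shift_witness w x_rel.
  have [lam [lam_ge0 lam_sum Hc]] := (in_semigroupP idp c).1 c_S.
  exists lam; split=> // -[j|] /=; last first.
    by under eq_bigr do rewrite mulr1; rewrite lam_sum c_deg -addn1 natrD.
  case: (boolP (fixed_coord j)) => [_|nonfixed].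
    by rewrite addr0 big1 // => i _; rewrite mulr0.
  rewrite -Hc; have := congr1 (fun m => (mexp m j)%:R : rat) E.
  rewrite /= !mexpD !natrD mexp_tmon.
  by rewrite (mexp_nonfixed_coord nonfixed (a_relint w) (a_deg w)); lra.
exists mu; split=> [//||j nonfixed].
  by have := Hmu None; rewrite /= => ->; apply: eq_bigr => i _; rewrite mulr1.
by have := Hmu (Some j); rewrite /= (negbTE nonfixed) => ->.
Qed.

Lemma min_decomposable_relint x : in_relint V x -> min_decomposable x.
Proof.
move=> x_rel; have x_deg := a0_min x_rel.
have [x_deg0|x_deg_neq] := eqVneq (mdeg x) a0.
  by exists x, 0%MM; split=> //; [exact: semigroup0 | rewrite addm0].
pose dl := (mdeg x - a0)%N; have dl_gt0 : (0 < dl)%N by rewrite /dl; lia.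
have [c [c_S c_deg E]] := shift_witness i0 x_rel.
have [u [c' [c'_S Ec]]] := semigroup_split idp c_S (ltac:(by rewrite c_deg)).
have c'_deg : mdeg c' = dl.
  by have := congr1 mdeg Ec; rewrite mdegD mdeg_tmon c_deg add1n => -[].
have x_fixed j : fixed_coord j -> mexp x j = (mexp (a u) j + mexp c' j)%N.
  move=> /fixed_coordP/(_ i0 u); have := congr1 (fun m => mexp m j) E.
  by rewrite Ec /= !mexpD !mexp_tmon; lia.
have [mu [mu_ge0 mu_sum Hmu]] := excess_incone x_rel.
have q_le j : ~~ fixed_coord j -> (mexp (a i0) j <= mexp x j)%N.
  move=> /Hmu; rewrite -(ler_nat rat) -subr_ge0 => ->.
  by apply: sumr_ge0 => i _; apply: mulr_ge0.
have c'_lat : latt_pt V dl (mexp c') by rewrite -c'_deg; apply/(in_semigroupP idp).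
(* x - a u agrees with c' on fixed coordinates and with x - a i0 elsewhere. *)
pose z j := (mexp x j - mexp (a i0) j)%N.
exists (a u), (tmon dl (fun j => if fixed_coord j then mexp c' j else z j)); split=> //.
  apply/(in_semigroupP idp); rewrite mdeg_tmon.
  apply: eq_latt_pt (latt_pt_mix (z := z) dl_gt0 c'_lat mu_ge0 mu_sum _) => j.
    by rewrite mexp_tmon.
  by move=> nonfixed; rewrite natrB ?q_le // Hmu.
apply: mono_eq => [|j]; first by rewrite mdegD mdeg_tmon a_deg /dl; lia.
rewrite mexpD mexp_tmon; case: ifP => [/x_fixed //|/negbT nonfixed].
by rewrite (mexp_nonfixed_coord nonfixed (a_relint u) (a_deg u)) subnKC ?q_le.
Qed.
End MinimalWitnesses.

Lemma relint_min_decomposable y0 : (0 < n)%N -> in_relint V y0 -> mdeg y0 = a0 ->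
  (forall i, exists2 a, in_relint V a & shift_relint_sub V a (vmon i)) ->
  forall x, in_relint V x -> min_decomposable x.
Proof.
move=> n_gt0 y0_rel y0_deg /fin_all_exists2[a a_rel a_shift].
have [/existsP[i]|/existsPn a_deg] := boolP [exists i, mdeg (a i) != a0].
  have [->|Ea] := shift_witness_mdeg (a_rel i) (a_shift i) y0_rel y0_deg.
    by rewrite eqxx.
  by move=> _; have := a_shift i; rewrite Ea; exact: min_decomposable_of_vmon_shift.
apply: (min_decomposable_relint (Ordinal n_gt0) a_rel a_shift).
by move=> i; apply/eqP; rewrite -[_ == _]negbK a_deg.
Qed.
End MinimalDecomposition.

Section Level.
Variables (K : fieldType) (d n : nat) (V : 'I_n -> 'I_d -> bool).
Hypothesis idp : IDP V.

Local Notation mono := 'X_{1..d.+1}.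
Local Notation poly := {mpoly K[d.+1]}.

Definition in_submod k (P : pred 'I_k) (g : 'I_k -> poly) (x : poly) : Prop :=
  exists r : 'I_k -> poly, (forall i, toric V (r i)) /\ x = \sum_(i | P i) r i * g i.

Section Submodule.
Variables (k : nat) (P : pred 'I_k) (g : 'I_k -> poly).

Lemma in_submod0 : in_submod P g 0.
Proof.
exists (fun _ => 0); split=> [i|]; first exact: supp_in0.
by rewrite big1 // => i _; rewrite mul0r.
Qed.

Lemma in_submodD x y : in_submod P g x -> in_submod P g y -> in_submod P g (x + y).
Proof.
move=> [r [r_tor ->]] [s [s_tor ->]]; exists (fun i => r i + s i); split.
  by move=> i; exact: supp_inD (r_tor i) (s_tor i).
by rewrite -big_split; apply: eq_bigr => i _; rewrite mulrDl.
Qed.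

Lemma in_submodZ c x : in_submod P g x -> in_submod P g (c *: x).
Proof.
move=> [r [r_tor ->]]; exists (fun i => c *: r i); split.
  by move=> i; exact: supp_inZ (r_tor i).
by rewrite scaler_sumr; apply: eq_bigr => i _; rewrite scalerAl.
Qed.

Lemma in_submodXM c x :
  in_semigroup V c -> in_submod P g x -> in_submod P g ('X_[c] * x).
Proof.
move=> c_S [r [r_tor ->]]; exists (fun i => 'X_[c] * r i); split.
  by move=> i; apply: supp_inXM (r_tor i) => m; exact: semigroupD.
by rewrite mulr_sumr; apply: eq_bigr => i _; rewrite mulrA.
Qed.

Lemma generates_canon_monomials :
  (forall m, in_relint V m -> in_submod P g 'X_[m]) -> generates_canon V P g.
Proof.
move=> gen w w_can; rewrite [w]mpolyE big_seq.
apply: (big_ind (in_submod P g)) => [|x y|m /w_can m_rel]; first exact: in_submod0.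
  exact: in_submodD.
exact/in_submodZ/gen.
Qed.

End Submodule.

Lemma mcoeffM_toric (r g : poly) (u : mono) : toric V r ->
  (forall m, m \in msupp g -> (mdeg u <= mdeg m)%N) -> (r * g)@_u = r@_0%MM * g@_u.
Proof.
move=> r_tor g_deg.
have -> : r@_0%MM = \sum_(m <- msupp r) r@_m * (m == 0%MM)%:R.
  by rewrite {1}[r]mpolyE raddf_sum; apply: eq_bigr => m _; rewrite /= mcoeffZ mcoeffX.
rewrite mulr_suml {1}[r]mpolyE mulr_suml raddf_sum !big_seq.
apply: eq_bigr => m m_supp /=; rewrite -scalerAl mcoeffZ -mulrA; congr (_ * _).
have [->|m_neq0] := eqVneq m 0%MM; first by rewrite mpolyX0 !mul1r.
rewrite mul0r memN_msupp_eq0 //; apply/negP.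
rewrite mulrC (perm_mem (msuppMX _ _)) => /mapP[m' /g_deg m'_deg Eu].
have : mdeg m != 0%N.
  by apply: contra m_neq0 => /eqP/(semigroup_mdeg0 idp (r_tor m m_supp)) ->.
by move: m'_deg; rewrite Eu mdegD; lia.
Qed.

Lemma homog_mcoeff_eq0 e (p : poly) u : homog_deg e p -> mdeg u != e -> p@_u = 0.
Proof. by move=> p_hom; apply: contraNeq; rewrite -mcoeff_msupp => /p_hom ->. Qed.

Lemma in_submod_lowest_degree k (g : 'I_k -> poly) (e : 'I_k -> nat) a0 j0 y :
  (forall i, homog_deg (e i) (g i)) -> (forall i, (a0 <= e i)%N) -> e j0 != a0 ->
  mdeg y = a0 -> in_submod predT g 'X_[y] -> in_submod (fun i => i != j0) g 'X_[y].
Proof.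
(* In degree a0 only the constant terms of the r i meet the g i of degree a0. *)
move=> g_hom e_ge ej0 y_deg [r [r_tor Ey]].
pose r' i := if e i == a0 then ((r i)@_0%MM)%:MP else 0 : poly.
exists r'; split=> [i|].
  rewrite /r'; case: eqP => _; last exact: supp_in0.
  by apply: supp_inC; exact: semigroup0.
have rg_coef i u : mdeg u = a0 -> (r i * g i)@_u = (r i)@_0%MM * (g i)@_u.
  by move=> u_deg; apply: mcoeffM_toric (r_tor i) _ => m /g_hom ->; rewrite u_deg.
have r'g_coef i u : (r' i * g i)@_u = if mdeg u == a0 then (r i * g i)@_u else 0.
  rewrite /r'; case: eqP => [ei|ei]; case: eqP => [u_deg|u_deg].
  - by rewrite mcoeffCM rg_coef.
  - by rewrite mcoeffCM (homog_mcoeff_eq0 (g_hom i)) ?mulr0 // ei; apply/eqP.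
  - rewrite mul0r mcoeff0 rg_coef // (homog_mcoeff_eq0 (g_hom i)) ?mulr0 //.
    by rewrite u_deg eq_sym; apply/eqP.
  - by rewrite mul0r mcoeff0.
apply/mpolyP => u; rewrite raddf_sum /=; under eq_bigr do rewrite r'g_coef.
case: eqP => u_deg; last first.
  by rewrite big1 // mcoeffX; case: eqP => // Eyu; case: u_deg; rewrite -Eyu.
rewrite Ey raddf_sum (bigD1 j0) //= rg_coef // (homog_mcoeff_eq0 (g_hom j0)).
  by rewrite mulr0 add0r.
by rewrite u_deg eq_sym.
Qed.

Lemma level_of_min_decomposable a0 :
  (forall m, in_relint V m -> (a0 <= mdeg m)%N) ->
  (forall x, in_relint V x -> min_decomposable V a0 x) -> level K V.
Proof.
move=> a0_min decomp k g e [g_hom_can g_gen g_min].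
have g_hom i : homog_deg (e i) (g i) by case: (g_hom_can i).
have g_neq0 i : g i != 0.
  apply/eqP => gi0; apply: (g_min i) => w /g_gen[r [r_tor ->]]; exists r; split=> //.
  by rewrite (bigD1 i) //= gi0 mulr0 add0r.
have e_ge i : (a0 <= e i)%N.
  have := g_neq0 i; rewrite -msupp_eq0; case E : (msupp (g i)) => [//|m s] _.
  have m_supp : m \in msupp (g i) by rewrite E mem_head.
  by rewrite -(g_hom i m m_supp); apply/a0_min/(g_hom_can i).1.
suff e_a0 i : e i = a0 by move=> i j; rewrite !e_a0.
apply/eqP/negPn/negP => ei; apply: (g_min i).
apply: generates_canon_monomials => x /decomp[y [c [y_rel y_deg c_S ->]]].
rewrite mpolyXD mulrC; apply: in_submodXM => //.
apply: in_submod_lowest_degree g_hom e_ge ei y_deg _.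
by apply: g_gen; apply: supp_inX.
Qed.

End Level.

Theorem corollary4p4 (K : fieldType) (d n : nat) (V : 'I_n -> 'I_d -> bool) :
  infinite_field K -> (0 < n)%N ->
  IDP V -> nearly_gorenstein K V -> level K V.
Proof.
(* The monomial description of omega and its trace needs no infinite field. *)
move=> _ n_gt0 idp ng.
have [y0 y0_rel y0_min] := relint_min_mdeg V.
apply: (level_of_min_decomposable idp y0_min) => x.
exact: (relint_min_decomposable idp y0_min n_gt0 y0_rel erefl
          (vmon_shift_witness idp ng)).
Qed.
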